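(* Let $ABC$ be a triangle with $\angle A\neq 90^\circ$. Then the points $S_A$ and $M_A$ are isogonal conjugates with respect to triangle $ABC$.
   Context: $O$ is the circumcenter of $ABC$. The symmedian from $A$ is the reflection of the median $AE$ ($E$ the midpoint of $BC$) in the bisector of angle $A$. $S_A$ is the unique point with $\angle BS_AC=2\angle A$ and $\angle CS_AA=\angle AS_AB=180^\circ-\angle A$ (directed angles); it is the point where the ray from $A$ along the symmedian from $A$ meets the arc $BC$ of the circle through $B$, $C$, $O$ that contains $O$. The point $M_A$: if $\angle A<90^\circ$, let $F$ be the second intersection of the median line $AE$ with the circumcircle of $ABC$, and $M_A$ the point on segment $AE$ with $EM_A=EF$; if $\angle A>90^\circ$, let $F$ be the point with $ABFC$ a parallelogram, and $M_A$ the second intersection of line $AE$ with the circumcircle of $FBC$. Points $P$ and $Q$ are isogonal conjugates with respect to $ABC$ if $\angle CBQ=\angle PBA$, $\angle BAP=\angle QAC$ and $\angle ACQ=\angle PCB$. *)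

From Stdlib Require Import Reals Lra.
Open Scope R_scope.

Definition pt := (R * R)%type.

Definition padd (P Q : pt) : pt := (fst P + fst Q, snd P + snd Q).
Definition psub (P Q : pt) : pt := (fst P - fst Q, snd P - snd Q).
Definition pscale (k : R) (P : pt) : pt := (k * fst P, k * snd P).
Definition dot (u v : pt) : R := fst u * fst v + snd u * snd v.
Definition cross (u v : pt) : R := fst u * snd v - snd u * fst v.
Definition norm (u : pt) : R := sqrt (dot u u).
Definition dist (P Q : pt) : R := norm (psub P Q).

Definition midpoint (B C : pt) : pt := pscale (1/2) (padd B C).

Definition collinear (A B C : pt) : Prop := cross (psub B A) (psub C A) = 0.

Definition is_circumcenter (O A B C : pt) : Prop :=
  dist O A = dist O B /\ dist O A = dist O C.

Definition concyclic (P Q R0 S : pt) : Prop :=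
  exists O : pt, dist O P = dist O Q /\ dist O P = dist O R0 /\ dist O P = dist O S.

(* Directed angle  ∠XYZ  = angle (mod 180°) of the rotation taking line YX to
   line YZ.  Encoded via the complex number w = (Z-Y) * conj (X-Y), whose
   real part is dot and imaginary part is cross.  Two directed angles are
   equal mod 180° iff  w1 * conj w2  is real, i.e. Im(w1 conj w2) = 0. *)
Definition dangle_eq (X Y Z X' Y' Z' : pt) : Prop :=
  let u := psub X Y in let v := psub Z Y in
  let u' := psub X' Y' in let v' := psub Z' Y' in
  cross u v * dot u' v' - dot u v * cross u' v' = 0.

Definition isogonal_conj (A B C P Q : pt) : Prop :=
  dangle_eq C B Q P B A /\ dangle_eq B A P Q A C /\ dangle_eq A C Q P C B.

Definition reflect_vec (u v : pt) : pt :=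
  psub (pscale (2 * dot v u / dot u u) u) v.

Definition bisector_dir (A B C : pt) : pt :=
  padd (pscale (/ dist B A) (psub B A)) (pscale (/ dist C A) (psub C A)).

Definition symmedian_dir (A B C : pt) : pt :=
  reflect_vec (bisector_dir A B C) (psub (midpoint B C) A).

Definition on_open_ray (A d P : pt) : Prop :=
  exists t : R, 0 < t /\ P = padd A (pscale t d).

Definition same_side (B C P Q : pt) : Prop :=
  cross (psub C B) (psub P B) * cross (psub C B) (psub Q B) > 0.

(* S is the point S_A: on the ray from A along the symmedian, and on the
   arc BC of the circle through B, C, O that contains O. *)
Definition is_SA (A B C O S : pt) : Prop :=
  on_open_ray A (symmedian_dir A B C) S /\ concyclic B C O S /\ same_side B C S O.

Definition is_MA (A B C O M : pt) : Prop :=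
  let E := midpoint B C in
  (dot (psub B A) (psub C A) > 0 ->
     exists F : pt, F <> A /\ collinear A E F /\ dist O F = dist O A /\
       (exists t : R, 0 <= t <= 1 /\ M = padd A (pscale t (psub E A))) /\
       dist E M = dist E F) /\
  (dot (psub B A) (psub C A) < 0 ->
     let F := psub (padd B C) A in
     M <> F /\ collinear A E M /\ concyclic F B C M).

From Pilot Require Import Defs.
From Stdlib Require Import Reals Lra Nsatz.
Open Scope R_scope.

(* Put A at the origin and write b, c for B - A, C - A and e for the midpoint of
   BC.  Reflecting the median in the bisector gives the symmedian direction
   g = |c|^2 b + |b|^2 c.  The circle BCO meets the line R g in two points: S_A = s g
   with s |g|^2 = |b|^2 |c|^2, and the point with 2 (b.c) s = 1, which lies on the
   other side of BC than O.  In both cases of the definition, M_A is the reflection in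
   E of the second intersection l e of the line AE with the circumcircle (for an
   obtuse angle because the circle FBC is the reflection of the circumcircle in E);
   since l |e|^2 = 2 o.e, this gives M_A = ((b.c) / |e|^2) e.  With S_A and M_A
   explicit, the three angle conditions are rational identities in b and c. *)

Lemma dot_self_nonneg (u : pt) : 0 <= dot u u.
Proof. destruct u; unfold dot; simpl; nra. Qed.

Lemma norm_mul_self (u : pt) : Defs.norm u * Defs.norm u = dot u u.
Proof. apply sqrt_sqrt, dot_self_nonneg. Qed.

Lemma dist_eq_dot (P Q P' Q' : pt) :
  Defs.dist P Q = Defs.dist P' Q' -> dot (psub P Q) (psub P Q) = dot (psub P' Q') (psub P' Q').
Proof. unfold Defs.dist; intro H; rewrite <- !norm_mul_self, H; reflexivity. Qed.

Lemma dot_self_pos_of_cross (u v : pt) : cross u v <> 0 -> 0 < dot u u.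
Proof.
  destruct u as [u1 u2], v as [v1 v2]; unfold cross, dot; simpl; intro Huv.
  destruct (Req_dec u1 0) as [-> | Hu1]; [| nra].
  destruct (Req_dec u2 0) as [-> | Hu2]; [| nra].
  exfalso; apply Huv; ring.
Qed.

Lemma dot_self_pos_of_cross_r (u v : pt) : cross u v <> 0 -> 0 < dot v v.
Proof.
  intro Huv; apply (dot_self_pos_of_cross v u).
  replace (cross v u) with (- cross u v) by (destruct u, v; unfold cross; simpl; ring).
  exact (Ropp_neq_0_compat _ Huv).
Qed.

Lemma lagrange_identity (u v : pt) :
  dot u u * dot v v = dot u v * dot u v + cross u v * cross u v.
Proof. destruct u, v; unfold dot, cross; simpl; ring. Qed.

Lemma psub_translate (P Q V : pt) : psub (psub P V) (psub Q V) = psub P Q.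
Proof. destruct P, Q, V; unfold psub; simpl; f_equal; ring. Qed.

Lemma dist_translate (P Q V : pt) : Defs.dist (psub P V) (psub Q V) = Defs.dist P Q.
Proof. unfold Defs.dist; rewrite psub_translate; reflexivity. Qed.

Lemma concyclic_translate (P Q R0 S V : pt) :
  concyclic P Q R0 S -> concyclic (psub P V) (psub Q V) (psub R0 V) (psub S V).
Proof. intros [X HX]; exists (psub X V); rewrite !dist_translate; exact HX. Qed.

Lemma same_side_translate (B C P Q V : pt) :
  same_side B C P Q -> same_side (psub B V) (psub C V) (psub P V) (psub Q V).
Proof. unfold same_side; rewrite !psub_translate; auto. Qed.

Lemma isogonal_conj_translate (A B C P Q : pt) :
  isogonal_conj (0, 0) (psub B A) (psub C A) (psub P A) (psub Q A) -> isogonal_conj A B C P Q.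
Proof.
  replace ((0, 0) : pt) with (psub A A) by (destruct A; unfold psub; simpl; f_equal; ring).
  unfold isogonal_conj, dangle_eq; rewrite !psub_translate; auto.
Qed.

Lemma midpoint_translate (B C A : pt) : psub (midpoint B C) A = midpoint (psub B A) (psub C A).
Proof. destruct A, B, C; unfold midpoint, psub, padd, pscale; simpl; f_equal; field. Qed.

Lemma circumcenter_chords (O A B C : pt) :
  is_circumcenter O A B C ->
  dot (psub B A) (psub B A) = 2 * dot (psub O A) (psub B A) /\
  dot (psub C A) (psub C A) = 2 * dot (psub O A) (psub C A).
Proof.
  intros [HB HC]; apply dist_eq_dot in HB, HC.
  destruct O, A, B, C; unfold dot, psub in *; simpl in *; split; nra.
Qed.

Definition symmedian_vec (b c : pt) : pt := padd (pscale (dot c c) b) (pscale (dot b b) c).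

Lemma norm_mul_add_dot_pos (b c : pt) :
  cross b c <> 0 -> 0 < Defs.norm b * Defs.norm c + dot b c.
Proof.
  intro Hbc.
  assert (Hlag : (Defs.norm b * Defs.norm c) * (Defs.norm b * Defs.norm c)
                 = dot b c * dot b c + cross b c * cross b c).
  { rewrite <- lagrange_identity, <- (norm_mul_self b), <- (norm_mul_self c); ring. }
  assert (0 <= Defs.norm b * Defs.norm c) by (apply Rmult_le_pos; apply sqrt_pos).
  assert (0 < cross b c * cross b c) by (apply Rsqr_pos_lt in Hbc; exact Hbc).
  nra.
Qed.

Lemma reflect_bisector_median (b c : pt) :
  cross b c <> 0 ->
  reflect_vec (padd (pscale (/ Defs.norm b) b) (pscale (/ Defs.norm c) c)) (midpoint b c)
  = pscale (/ (2 * Defs.norm b * Defs.norm c)) (symmedian_vec b c).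
Proof.
  intro Hbc.
  pose proof (norm_mul_add_dot_pos b c Hbc) as Hk.
  assert (Hb : 0 < dot b b) by exact (dot_self_pos_of_cross b c Hbc).
  assert (Hc : 0 < dot c c) by exact (dot_self_pos_of_cross_r b c Hbc).
  pose proof (norm_mul_self b) as Hp; pose proof (norm_mul_self c) as Hq.
  pose proof (sqrt_pos (dot b b)); pose proof (sqrt_pos (dot c c)).
  set (p := Defs.norm b) in *; set (q := Defs.norm c) in *.
  assert (0 < p) by (unfold p, Defs.norm in *; nra).
  assert (0 < q) by (unfold q, Defs.norm in *; nra).
  clearbody p q.
  set (w := padd (pscale (/ p) b) (pscale (/ q) c)).
  assert (Hww : dot w w = 2 * (p * q + dot b c) / (p * q)).
  { transitivity (dot b b / (p * p) + 2 * dot b c / (p * q) + dot c c / (q * q)).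
    - unfold w; destruct b, c; unfold dot, padd, pscale; simpl; field; lra.
    - rewrite <- Hp, <- Hq; field; lra. }
  assert (Hew : dot (midpoint b c) w = (p + q) * (p * q + dot b c) / (2 * p * q)).
  { transitivity ((dot b b / p + dot b c / p + dot b c / q + dot c c / q) / 2).
    - unfold w; destruct b, c; unfold dot, midpoint, padd, pscale; simpl; field; lra.
    - rewrite <- Hp, <- Hq; field; lra. }
  unfold reflect_vec; rewrite Hww, Hew.
  replace (2 * ((p + q) * (p * q + dot b c) / (2 * p * q)) / (2 * (p * q + dot b c) / (p * q)))
    with ((p + q) / 2) by (field; lra).
  unfold w, symmedian_vec; rewrite <- Hp, <- Hq.
  destruct b, c; unfold midpoint, psub, padd, pscale; simpl; f_equal; field; lra.
Qed.

Lemma symmedian_dir_eq (A B C : pt) :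
  ~ collinear A B C ->
  symmedian_dir A B C
  = pscale (/ (2 * Defs.dist B A * Defs.dist C A)) (symmedian_vec (psub B A) (psub C A)).
Proof.
  intro H; unfold symmedian_dir, bisector_dir, Defs.dist.
  rewrite midpoint_translate; exact (reflect_bisector_median _ _ H).
Qed.

Lemma psub_dot_self_pos (b c : pt) : cross b c <> 0 -> 0 < dot (psub b c) (psub b c).
Proof.
  intro Hbc; apply (dot_self_pos_of_cross _ b).
  replace (cross (psub b c) b) with (cross b c) by (destruct b, c; unfold cross, psub; simpl; ring).
  exact Hbc.
Qed.

Lemma midpoint_dot_self_pos (b c : pt) : cross b c <> 0 -> 0 < dot (midpoint b c) (midpoint b c).
Proof.
  intro Hbc; apply (dot_self_pos_of_cross _ c).
  replace (cross (midpoint b c) c) with (cross b c / 2)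
    by (destruct b, c; unfold cross, midpoint, padd, pscale; simpl; field).
  lra.
Qed.

Lemma symmedian_vec_dot_self_pos (b c : pt) :
  cross b c <> 0 -> 0 < dot (symmedian_vec b c) (symmedian_vec b c).
Proof.
  intro Hbc; apply (dot_self_pos_of_cross _ c).
  replace (cross (symmedian_vec b c) c) with (dot c c * cross b c)
    by (destruct b, c; unfold symmedian_vec, cross, dot, padd, pscale; simpl; ring).
  pose proof (dot_self_pos_of_cross_r _ _ Hbc); apply Rmult_integral_contrapositive; lra.
Qed.

(* The circles through b and c form the pencil
   [power w.r.t. the circumcircle + lambda * (signed distance to BC)];
   passing through o fixes lambda. *)
Lemma concyclic_BCO_equation (b c o s : pt) :
  dot b b = 2 * dot o b -> dot c c = 2 * dot o c -> concyclic b c o s ->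
  cross (psub c b) (psub o b) * (dot s s - 2 * dot s o)
  + dot o o * cross (psub c b) (psub s b) = 0.
Proof.
  intros Hb Hc [x [Hxc [Hxo Hxs]]]; apply dist_eq_dot in Hxc, Hxo, Hxs.
  destruct b, c, o, s, x; unfold dot, cross, psub in *; simpl in *; nsatz.
Qed.

Lemma symmedian_circle_BCO_factor (b c o : pt) (sg : R) :
  let g := symmedian_vec b c in let s := pscale sg g in
  dot b b = 2 * dot o b -> dot c c = 2 * dot o c ->
  4 * cross b c * (cross (psub c b) (psub o b) * (dot s s - 2 * dot s o)
                   + dot o o * cross (psub c b) (psub s b))
  = dot (psub b c) (psub b c) * ((sg * dot g g - dot b b * dot c c) * (2 * dot b c * sg - 1)).
Proof.
  intros g s; unfold s, g, symmedian_vec; destruct b, c, o;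
    unfold dot, cross, psub, padd, pscale; simpl; intros Hb Hc; nsatz.
Qed.

Lemma symmedian_line_circle_BCO_roots (b c o : pt) (sg : R) :
  let g := symmedian_vec b c in
  cross b c <> 0 -> dot b b = 2 * dot o b -> dot c c = 2 * dot o c ->
  concyclic b c o (pscale sg g) ->
  (sg * dot g g - dot b b * dot c c) * (2 * dot b c * sg - 1) = 0.
Proof.
  cbv zeta; intros Hbc Hb Hc Hcyc.
  pose proof (symmedian_circle_BCO_factor b c o sg Hb Hc) as Hfactor; cbv zeta in Hfactor.
  rewrite (concyclic_BCO_equation _ _ _ _ Hb Hc Hcyc), Rmult_0_r in Hfactor.
  pose proof (psub_dot_self_pos _ _ Hbc).
  symmetry in Hfactor; apply Rmult_integral in Hfactor as [Hn | Hroots]; [lra | exact Hroots].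
Qed.

Lemma symmedian_circle_BCO_side (b c o : pt) (sg : R) :
  let s := pscale sg (symmedian_vec b c) in
  dot b b = 2 * dot o b -> dot c c = 2 * dot o c -> 2 * dot b c * sg = 1 ->
  cross b c * (4 * (cross (psub c b) (psub s b) * cross (psub c b) (psub o b))
               + dot (psub b c) (psub b c) * dot (psub b c) (psub b c)) = 0.
Proof.
  intro s; unfold s, symmedian_vec; destruct b, c, o;
    unfold dot, cross, psub, padd, pscale; simpl; intros Hb Hc Hsg; nsatz.
Qed.

Lemma symmedian_second_point_opposite_side (b c o : pt) (sg : R) :
  cross b c <> 0 -> dot b b = 2 * dot o b -> dot c c = 2 * dot o c -> 2 * dot b c * sg = 1 ->
  ~ same_side b c (pscale sg (symmedian_vec b c)) o.
Proof.
  intros Hbc Hb Hc Hsg; unfold same_side.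
  pose proof (symmedian_circle_BCO_side b c o sg Hb Hc Hsg) as Hside; cbv zeta in Hside.
  apply Rmult_integral in Hside as [Hbc0 | Hside]; [contradiction |].
  pose proof (psub_dot_self_pos _ _ Hbc) as Hn.
  pose proof (Rmult_lt_0_compat _ _ Hn Hn); lra.
Qed.

Lemma SA_position (A B C O S : pt) :
  ~ collinear A B C -> is_circumcenter O A B C -> is_SA A B C O S ->
  let b := psub B A in let c := psub C A in let g := symmedian_vec b c in
  psub S A = pscale (dot b b * dot c c / dot g g) g.
Proof.
  intros Hnc HO [[t [_ HS]] [Hcyc Hside]]; cbv zeta.
  destruct (circumcenter_chords _ _ _ _ HO) as [Hb Hc].
  rewrite (symmedian_dir_eq _ _ _ Hnc) in HS.
  set (g := symmedian_vec (psub B A) (psub C A)) in *.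
  set (sg := t * / (2 * Defs.dist B A * Defs.dist C A)).
  assert (Hs : psub S A = pscale sg g)
    by (rewrite HS; destruct A, g; unfold sg, psub, padd, pscale; simpl; f_equal; ring).
  apply (concyclic_translate _ _ _ _ A) in Hcyc; apply (same_side_translate _ _ _ _ A) in Hside.
  rewrite Hs in Hcyc, Hside.
  pose proof (symmedian_vec_dot_self_pos _ _ Hnc) as Hg.
  destruct (Rmult_integral _ _ (symmedian_line_circle_BCO_roots _ _ _ sg Hnc Hb Hc Hcyc))
    as [Hroot | Hroot].
  - rewrite Hs; f_equal; fold g in Hroot; field_simplify_eq; [lra | apply Rgt_not_eq, Hg].
  - exfalso; refine (symmedian_second_point_opposite_side _ _ _ sg Hnc Hb Hc _ Hside); lra.
Qed.

Lemma parallel_scale (e f : pt) : 0 < dot e e -> cross e f = 0 -> f = pscale (dot f e / dot e e) e.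
Proof.
  destruct e as [e1 e2], f as [f1 f2]; unfold dot, cross, pscale; simpl; intros He Hef.
  assert (Hswap : e1 * f2 = e2 * f1) by lra.
  f_equal; field_simplify_eq; try lra.
  - rewrite Hswap; ring.
  - replace (f2 * e1 ^ 2) with (e1 * (e1 * f2)) by ring; rewrite Hswap; ring.
Qed.

Lemma line_meets_circle_through_origin (e o : pt) (l : R) :
  l <> 0 -> dot (psub o (pscale l e)) (psub o (pscale l e)) = dot o o ->
  l * dot e e = 2 * dot o e.
Proof.
  intros Hl Hcirc.
  assert (Hfactor : l * (l * dot e e - 2 * dot o e) = 0)
    by (destruct e, o; unfold dot, psub, pscale in *; simpl in *; lra).
  apply Rmult_integral in Hfactor as [Hl0 | Hfactor]; [contradiction | lra].
Qed.

Lemma second_intersection_median (b c o : pt) (l : R) :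
  let e := midpoint b c in
  dot b b = 2 * dot o b -> dot c c = 2 * dot o c -> l * dot e e = 2 * dot o e ->
  (l - 1) * dot e e = dot (psub b c) (psub b c) / 4 /\ (2 - l) * dot e e = dot b c.
Proof.
  intro e; unfold e; destruct b, c, o; unfold midpoint, dot, psub, padd, pscale; simpl.
  intros Hb Hc Hl; split; lra.
Qed.

(* The circle through b + c, b and c is the reflection in the midpoint of BC of the
   circumcircle (centre o, through 0, b and c): its centre is b + c - o. *)
Lemma circle_through_reflected_vertex (b c o m : pt) :
  cross b c <> 0 -> dot b b = 2 * dot o b -> dot c c = 2 * dot o c ->
  concyclic (padd b c) b c m ->
  dot (psub o (psub (padd b c) m)) (psub o (psub (padd b c) m)) = dot o o.
Proof.
  intros Hbc Hb Hc [x [Hxb [Hxc Hxm]]]; apply dist_eq_dot in Hxb, Hxc, Hxm.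
  assert (Hfactor : cross b c * (dot (psub o (psub (padd b c) m)) (psub o (psub (padd b c) m))
                                 - dot o o) = 0).
  { destruct b, c, o, m, x; unfold dot, cross, psub, padd in *; simpl in *; nsatz. }
  apply Rmult_integral in Hfactor as [Hbc0 | Hfactor]; [contradiction | lra].
Qed.

Lemma MA_acute_position (A B C O M : pt) :
  let e := midpoint (psub B A) (psub C A) in
  ~ collinear A B C -> dot (psub B A) (psub C A) > 0 -> is_circumcenter O A B C ->
  is_MA A B C O M ->
  exists l, l * dot e e = 2 * dot (psub O A) e /\ psub M A = pscale (2 - l) e.
Proof.
  intros e Hnc Hk HO [HMa _].
  destruct (HMa Hk) as [F [HFA [Hcol [HOF [[t [Ht HMt]] HEM]]]]].
  destruct (circumcenter_chords _ _ _ _ HO) as [Hb Hc].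
  pose proof (midpoint_dot_self_pos _ _ Hnc) as He; fold e in He.
  unfold collinear in Hcol; rewrite midpoint_translate in Hcol; fold e in Hcol.
  set (l := dot (psub F A) e / dot e e).
  assert (Hf : psub F A = pscale l e) by exact (parallel_scale _ _ He Hcol).
  assert (Hl0 : l <> 0).
  { intro Hl0; apply HFA; rewrite Hl0 in Hf.
    destruct A, F, e; unfold psub, pscale in Hf; simpl in Hf; injection Hf; intros.
    f_equal; lra. }
  apply dist_eq_dot in HOF; rewrite <- (psub_translate O F A), Hf in HOF.
  pose proof (line_meets_circle_through_origin _ _ _ Hl0 HOF) as Hl.
  destruct (second_intersection_median _ _ _ l Hb Hc Hl) as [Hl1 _]; fold e in Hl1.
  pose proof (psub_dot_self_pos _ _ Hnc).
  assert (Hm : psub M A = pscale t e).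
  { rewrite HMt, midpoint_translate; fold e.
    destruct A, e; unfold psub, padd, pscale; simpl; f_equal; ring. }
  apply dist_eq_dot in HEM.
  rewrite <- (psub_translate _ M A), <- (psub_translate _ F A), midpoint_translate, Hm, Hf in HEM.
  fold e in HEM; clearbody e l.
  assert (Hsq : (1 - t) * (1 - t) = (1 - l) * (1 - l)).
  { apply (Rmult_eq_reg_r (dot e e)); [| lra].
    destruct e; unfold dot, psub, pscale in *; simpl in *; lra. }
  assert (Hl_gt1 : 1 < l) by nra.
  assert (Hfactor : (2 - l - t) * (l - t) = 0) by nra.
  apply Rmult_integral in Hfactor as [Ht2 | Ht2]; [| lra].
  exists l; split; [exact Hl |].
  rewrite Hm; f_equal; lra.
Qed.

Lemma MA_obtuse_position (A B C O M : pt) :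
  let e := midpoint (psub B A) (psub C A) in
  ~ collinear A B C -> dot (psub B A) (psub C A) < 0 -> is_circumcenter O A B C ->
  is_MA A B C O M ->
  exists l, l * dot e e = 2 * dot (psub O A) e /\ psub M A = pscale (2 - l) e.
Proof.
  intros e Hnc Hk HO [_ HMo].
  destruct (HMo Hk) as [HMF [Hcol Hcyc]].
  destruct (circumcenter_chords _ _ _ _ HO) as [Hb Hc].
  pose proof (midpoint_dot_self_pos _ _ Hnc) as He; fold e in He.
  unfold collinear in Hcol; rewrite midpoint_translate in Hcol; fold e in Hcol.
  set (mu := dot (psub M A) e / dot e e).
  assert (Hm : psub M A = pscale mu e) by exact (parallel_scale _ _ He Hcol).
  apply (concyclic_translate _ _ _ _ A) in Hcyc.
  replace (psub (psub (padd B C) A) A) with (padd (psub B A) (psub C A)) in Hcyc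
    by (destruct A, B, C; unfold psub, padd; simpl; f_equal; ring).
  pose proof (circle_through_reflected_vertex _ _ _ _ Hnc Hb Hc Hcyc) as Hcirc.
  replace (psub (padd (psub B A) (psub C A)) (psub M A)) with (pscale (2 - mu) e) in Hcirc
    by (rewrite Hm; unfold e; destruct A, B, C; unfold midpoint, psub, padd, pscale; simpl;
        f_equal; field).
  assert (Hl0 : 2 - mu <> 0).
  { intro Hmu; apply HMF.
    assert (HmF : psub M A = psub (psub (padd B C) A) A).
    { rewrite Hm; replace mu with 2 by lra; unfold e;
        destruct A, B, C; unfold midpoint, psub, padd, pscale; simpl; f_equal; field. }
    destruct A, M, B, C; unfold psub, padd in HmF |- *; simpl in *; injection HmF; intros.
    f_equal; lra. }
  exists (2 - mu); split.
  - exact (line_meets_circle_through_origin _ _ _ Hl0 Hcirc).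
  - rewrite Hm; f_equal; ring.
Qed.

Lemma MA_position (A B C O M : pt) :
  let b := psub B A in let c := psub C A in let e := midpoint b c in
  ~ collinear A B C -> dot b c <> 0 -> is_circumcenter O A B C -> is_MA A B C O M ->
  psub M A = pscale (dot b c / dot e e) e.
Proof.
  intros b c e Hnc Hk HO HM.
  destruct (circumcenter_chords _ _ _ _ HO) as [Hb Hc].
  assert (Hreflected : exists l, l * dot e e = 2 * dot (psub O A) e /\ psub M A = pscale (2 - l) e).
  { destruct (Rlt_or_le 0 (dot b c)) as [Hpos | Hneg].
    - exact (MA_acute_position _ _ _ _ _ Hnc Hpos HO HM).
    - refine (MA_obtuse_position _ _ _ _ _ Hnc _ HO HM); unfold b, c in *; lra. }
  destruct Hreflected as [l [Hl Hm]].
  destruct (second_intersection_median _ _ _ l Hb Hc Hl) as [_ Hbc]; fold b c e in Hbc.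
  pose proof (midpoint_dot_self_pos _ _ Hnc) as He; fold b c e in He.
  rewrite Hm; f_equal; clearbody b c e; field_simplify_eq; lra.
Qed.

Lemma isogonal_conj_origin (b c : pt) :
  let g := symmedian_vec b c in let e := midpoint b c in
  dot g g <> 0 -> dot e e <> 0 ->
  isogonal_conj (0, 0) b c (pscale (dot b b * dot c c / dot g g) g) (pscale (dot b c / dot e e) e).
Proof.
  destruct b as [b1 b2], c as [c1 c2]; unfold symmedian_vec, midpoint, isogonal_conj, dangle_eq;
  unfold dot, cross, psub, padd, pscale; simpl; intros Hg He.
  repeat split; field; split; try assumption; contradict He; nra.
Qed.

Theorem theorem12 (A B C O S M : pt) :
  ~ collinear A B C ->
  dot (psub B A) (psub C A) <> 0 ->
  is_circumcenter O A B C ->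
  is_SA A B C O S ->
  is_MA A B C O M ->
  isogonal_conj A B C S M.
Proof.
  intros Hnc Hk HO HS HM.
  apply isogonal_conj_translate.
  rewrite (SA_position _ _ _ _ _ Hnc HO HS), (MA_position _ _ _ _ _ Hnc Hk HO HM).
  apply isogonal_conj_origin.
  - exact (Rgt_not_eq _ _ (symmedian_vec_dot_self_pos _ _ Hnc)).
  - exact (Rgt_not_eq _ _ (midpoint_dot_self_pos _ _ Hnc)).
Qed.
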